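(* Let $\beta>1$ be fixed. Then the sequence $(\delta(k,\beta))_{k\in\mathbb{N}}$ is strictly increasing and \[ \delta(k,\beta)=(\beta-1)-\frac{\beta}{2(\beta+1)}\frac{1}{k^2}+O\!\left(\frac1{k^3}\right),\qquad k\to+\infty. \]
   Context: $\mathbb{N}=\{0,1,2,\dots\}$. For $t\ge 0$ let $q(t)=\lfloor t+1\rfloor/2$ if $\lfloor t\rfloor$ is odd and $q(t)=t-\lfloor t\rfloor/2$ if $\lfloor t\rfloor$ is even, and $p(t)=t+1-q(t)$. For $\beta\ge1$ let $\hat\sigma(t,\beta)\in(0,1)$ be the unique solution $\sigma$ of $\frac{p(t)\sigma}{\sqrt{1-\sigma^2}}+\frac{q(t)\sigma}{\sqrt{\beta^2-\sigma^2}}=1$, and $l(t,\beta)=\frac{p(t)}{\sqrt{1-\hat\sigma^2}}+\frac{\beta^2q(t)}{\sqrt{\beta^2-\hat\sigma^2}}-t-\sqrt2$. For $k\in\mathbb{N}$, $\delta(k,\beta)=l(2k+2,\beta)-l(2k,\beta)$. *)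

From Stdlib Require Import Reals Lra ZArith ClassicalEpsilon.
Open Scope R_scope.

Definition floorZ (t : R) : Z := Int_part t.

Definition q (t : R) : R :=
  if Z.odd (floorZ t) then IZR (floorZ (t + 1)) / 2
  else t - IZR (floorZ t) / 2.

Definition p (t : R) : R := t + 1 - q t.

Definition sigma_eq (t beta s : R) : Prop :=
  p t * s / sqrt (1 - s ^ 2) + q t * s / sqrt (beta ^ 2 - s ^ 2) = 1.

Definition sigma_hat (t beta : R) : R :=
  epsilon (inhabits 0) (fun s => 0 < s < 1 /\ sigma_eq t beta s).

Definition l (t beta : R) : R :=
  let s := sigma_hat t beta in
  p t / sqrt (1 - s ^ 2) + beta ^ 2 * q t / sqrt (beta ^ 2 - s ^ 2) - t - sqrt 2.

Definition delta (k : nat) (beta : R) : R :=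
  l (2 * INR k + 2) beta - l (2 * INR k) beta.

From Stdlib Require Import Reals Lra Psatz ZArith ClassicalEpsilon.
From Coquelicot Require Import Coquelicot.
Open Scope R_scope.

(* At t = 2n one has p = n + 1 and q = n, and l(2n, beta) + 2n + sqrt 2 is the maximum
   over s of the concave function
     phi_n(s) = s + (n + 1) sqrt (1 - s^2) + n sqrt (beta^2 - s^2),
   attained at the critical point sigma_n = sigma_hat(2n, beta).  Since phi_n is affine in
   n, n |-> l(2n, beta) is a maximum of affine functions, hence convex, and strictly so
   because sigma_n <> sigma_(n+1): this is the monotonicity of delta.  Evaluating the
   maxima at sigma_k and sigma_(k+1) squeezes delta(k, beta) between B(sigma_k) - 2 and
   B(sigma_(k+1)) - 2, where B(s) = sqrt (1 - s^2) + sqrt (beta^2 - s^2)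
   = beta + 1 - (1 + 1/beta) s^2 / 2 + O(s^4), while the critical-point equation gives
   sigma_k = beta / ((beta + 1) k) + O(1/k^2). *)

Lemma floorZ_double_INR (n : nat) : floorZ (2 * INR n) = (2 * Z.of_nat n)%Z.
Proof.
  unfold floorZ. replace (2 * INR n) with (INR (2 * n)) by (rewrite mult_INR; simpl; ring).
  rewrite Int_part_INR. lia.
Qed.

Lemma q_double_INR (n : nat) : q (2 * INR n) = INR n.
Proof.
  unfold q. rewrite floorZ_double_INR, Z.odd_mul, Bool.andb_false_l.
  rewrite mult_IZR, <- INR_IZR_INZ. field.
Qed.

Lemma p_double_INR (n : nat) : p (2 * INR n) = INR n + 1.
Proof. unfold p. rewrite q_double_INR. ring. Qed.

Lemma sqrt_le_of_le_sq (x w : R) : 0 <= w -> x <= w * w -> sqrt x <= w.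
Proof. intros Hw H. rewrite <- (sqrt_square w) by exact Hw. apply sqrt_le_1_alt, H. Qed.

Lemma sqrt_ge_of_sq_le (x w : R) : 0 <= x -> w * w <= x -> w <= sqrt x.
Proof.
  intros Hx H. destruct (Rle_or_lt w 0) as [Hw | Hw].
  - pose proof (sqrt_pos x). lra.
  - rewrite <- (sqrt_square w) by lra. apply sqrt_le_1_alt, H.
Qed.

Lemma sqrt_sub_sq_mul_le (c s t : R) : s ^ 2 <= c -> t ^ 2 <= c ->
  s * t + sqrt (c - s ^ 2) * sqrt (c - t ^ 2) <= c.
Proof.
  intros Hs Ht.
  assert (Hsq : forall x, x ^ 2 <= c -> Rsqr x + Rsqr (sqrt (c - x ^ 2)) = c).
  { intros x Hx. rewrite Rsqr_sqrt by lra. unfold Rsqr. ring. }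
  pose proof (sqrt_cauchy s (sqrt (c - s ^ 2)) t (sqrt (c - t ^ 2))) as H.
  rewrite !Hsq, sqrt_sqrt in H by nra. exact H.
Qed.

Lemma sqrt_sub_sq_mul_lt (c s t : R) : s ^ 2 <= c -> t ^ 2 <= c -> s <> t ->
  s * t + sqrt (c - s ^ 2) * sqrt (c - t ^ 2) < c.
Proof.
  intros Hs Ht Hst.
  assert (Hpos : 0 < (s - t) ^ 2) by (apply pow2_gt_0; lra).
  pose proof (sqrt_pos (c - s ^ 2)). pose proof (sqrt_pos (c - t ^ 2)).
  pose proof (sqrt_sqrt (c - s ^ 2) ltac:(lra)). pose proof (sqrt_sqrt (c - t ^ 2) ltac:(lra)).
  set (u := sqrt (c - s ^ 2)) in *. set (v := sqrt (c - t ^ 2)) in *.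
  assert (Huv : (u * v) ^ 2 = (c - s * t) ^ 2 - c * (s - t) ^ 2) by nra.
  assert (Hc : 0 < c) by nra.
  assert (Hst2 : 0 < c - s * t) by nra.
  nra.
Qed.

(* With [pp = p t], [qq = q t] and [sg = sigma_hat t b], [critical_value] is the expression
   [l t b + t + sqrt 2], and it is the maximum of [phi pp qq b] (lemmas below). *)
Definition phi (pp qq b s : R) : R := s + pp * sqrt (1 - s ^ 2) + qq * sqrt (b ^ 2 - s ^ 2).

Definition is_critical (pp qq b s : R) : Prop :=
  pp * s / sqrt (1 - s ^ 2) + qq * s / sqrt (b ^ 2 - s ^ 2) = 1.

Definition critical_value (pp qq b s : R) : R :=
  pp / sqrt (1 - s ^ 2) + b ^ 2 * qq / sqrt (b ^ 2 - s ^ 2).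

Section CriticalPoint.

Variables (pp qq b sg : R).
Hypotheses (Hb : 1 <= b) (Hsg : 0 < sg < 1) (Hcrit : is_critical pp qq b sg).

Let Hu : 0 < sqrt (1 - sg ^ 2). Proof. apply sqrt_lt_R0. nra. Qed.
Let Hv : 0 < sqrt (b ^ 2 - sg ^ 2). Proof. apply sqrt_lt_R0. nra. Qed.

Lemma critical_value_sub_phi (s : R) :
  critical_value pp qq b sg - phi pp qq b s =
  pp * (1 - sg * s - sqrt (1 - sg ^ 2) * sqrt (1 - s ^ 2)) / sqrt (1 - sg ^ 2) +
  qq * (b ^ 2 - sg * s - sqrt (b ^ 2 - sg ^ 2) * sqrt (b ^ 2 - s ^ 2)) / sqrt (b ^ 2 - sg ^ 2).
Proof.
  unfold critical_value, phi, is_critical in *.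
  replace s with (s * (pp * sg / sqrt (1 - sg ^ 2) + qq * sg / sqrt (b ^ 2 - sg ^ 2))) at 1
    by (rewrite Hcrit; ring).
  field. split; lra.
Qed.

Lemma phi_le_critical_value (s : R) : 0 <= pp -> 0 <= qq -> s ^ 2 <= 1 ->
  phi pp qq b s <= critical_value pp qq b sg.
Proof.
  intros Hp Hq Hs.
  assert (G1 : 0 <= pp * (1 - sg * s - sqrt (1 - sg ^ 2) * sqrt (1 - s ^ 2)) / sqrt (1 - sg ^ 2)).
  { apply Rdiv_le_0_compat; [apply Rmult_le_pos | ]; try lra.
    pose proof (sqrt_sub_sq_mul_le 1 sg s). nra. }
  assert (G2 : 0 <= qq * (b ^ 2 - sg * s - sqrt (b ^ 2 - sg ^ 2) * sqrt (b ^ 2 - s ^ 2)) / sqrt (b ^ 2 - sg ^ 2)).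
  { apply Rdiv_le_0_compat; [apply Rmult_le_pos | ]; try lra.
    pose proof (sqrt_sub_sq_mul_le (b ^ 2) sg s). nra. }
  pose proof (critical_value_sub_phi s). lra.
Qed.

Lemma phi_lt_critical_value (s : R) : 0 < pp -> 0 <= qq -> s ^ 2 <= 1 -> s <> sg ->
  phi pp qq b s < critical_value pp qq b sg.
Proof.
  intros Hp Hq Hs Hne.
  assert (G1 : 0 < pp * (1 - sg * s - sqrt (1 - sg ^ 2) * sqrt (1 - s ^ 2)) / sqrt (1 - sg ^ 2)).
  { apply Rdiv_lt_0_compat; [apply Rmult_lt_0_compat | ]; try lra.
    pose proof (sqrt_sub_sq_mul_lt 1 sg s ltac:(nra) Hs ltac:(auto)). lra. }
  assert (G2 : 0 <= qq * (b ^ 2 - sg * s - sqrt (b ^ 2 - sg ^ 2) * sqrt (b ^ 2 - s ^ 2)) / sqrt (b ^ 2 - sg ^ 2)).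
  { apply Rdiv_le_0_compat; [apply Rmult_le_pos | ]; try lra.
    pose proof (sqrt_sub_sq_mul_le (b ^ 2) sg s). nra. }
  pose proof (critical_value_sub_phi s). lra.
Qed.

Lemma phi_critical : phi pp qq b sg = critical_value pp qq b sg.
Proof.
  pose proof (critical_value_sub_phi sg) as E.
  rewrite !sqrt_sqrt in E by nra.
  replace (1 - sg * sg - (1 - sg ^ 2)) with 0 in E by ring.
  replace (b ^ 2 - sg * sg - (b ^ 2 - sg ^ 2)) with 0 in E by ring.
  unfold Rdiv in E. lra.
Qed.

End CriticalPoint.

Lemma is_critical_exists (pp qq b : R) : 1 <= pp -> 0 <= qq -> 1 <= b ->
  exists s, 0 < s < 1 /\ is_critical pp qq b s.
Proof.
  intros Hp Hq Hb.
  set (f s := pp * s / sqrt (1 - s ^ 2) + qq * s / sqrt (b ^ 2 - s ^ 2) - 1).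
  assert (Hcont : forall s, 0 <= s <= 4/5 -> continuity_pt f s).
  { intros s Hs. apply continuity_pt_filterlim.
    apply (@ex_derive_continuous R_AbsRing R_NormedModule).
    unfold f. auto_derive. repeat split; try nra; apply Rgt_not_eq, sqrt_lt_R0; nra. }
  assert (Hf0 : f 0 < 0).
  { unfold f. unfold Rdiv. rewrite !Rmult_0_r, !Rmult_0_l. lra. }
  assert (Hf45 : 0 < f (4/5)).
  { assert (Hs : sqrt (1 - (4/5) ^ 2) = 3/5).
    { replace (1 - (4/5) ^ 2) with ((3/5) ^ 2) by field. apply sqrt_pow2. lra. }
    assert (0 <= qq * (4/5) / sqrt (b ^ 2 - (4/5) ^ 2)).
    { apply Rdiv_le_0_compat; [nra | apply sqrt_lt_R0; nra]. }
    unfold f. rewrite Hs. lra. }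
  destruct (Ranalysis5.IVT_interv f 0 (4/5) Hcont ltac:(lra) Hf0 Hf45) as [s [Hs Hfs]].
  assert (s <> 0) by (intros ->; lra).
  exists s. unfold f in Hfs. unfold is_critical. split; lra.
Qed.

Definition sig (n : nat) (b : R) : R := sigma_hat (2 * INR n) b.

Lemma sig_spec (n : nat) (b : R) : 1 <= b ->
  0 < sig n b < 1 /\ is_critical (INR n + 1) (INR n) b (sig n b).
Proof.
  intros Hb. pose proof (pos_INR n).
  unfold sig, sigma_hat.
  set (P s := 0 < s < 1 /\ sigma_eq (2 * INR n) b s).
  assert (HP : P (epsilon (inhabits 0) P)).
  { apply epsilon_spec. unfold P, sigma_eq. rewrite p_double_INR, q_double_INR.
    apply is_critical_exists; lra. }
  destruct HP as [Hs Heq]. split; [exact Hs |].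
  unfold sigma_eq in Heq. rewrite p_double_INR, q_double_INR in Heq. exact Heq.
Qed.

Lemma l_double_INR (n : nat) (b : R) : 1 <= b ->
  l (2 * INR n) b = phi (INR n + 1) (INR n) b (sig n b) - 2 * INR n - sqrt 2.
Proof.
  intros Hb. destruct (sig_spec n b Hb) as [Hs Hcrit].
  rewrite phi_critical by assumption.
  unfold l, critical_value. rewrite p_double_INR, q_double_INR. reflexivity.
Qed.

Definition root_sum (b s : R) : R := sqrt (1 - s ^ 2) + sqrt (b ^ 2 - s ^ 2).

Lemma phi_succ (n : nat) (b s : R) :
  phi (INR (S n) + 1) (INR (S n)) b s = phi (INR n + 1) (INR n) b s + root_sum b s.
Proof. unfold phi, root_sum. rewrite S_INR. ring. Qed.

Lemma phi_le_l_double_INR (n : nat) (b s : R) : 1 <= b -> s ^ 2 <= 1 ->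
  phi (INR n + 1) (INR n) b s - 2 * INR n - sqrt 2 <= l (2 * INR n) b.
Proof.
  intros Hb Hs. destruct (sig_spec n b Hb) as [Hsg Hcrit]. pose proof (pos_INR n).
  pose proof (phi_le_critical_value _ _ _ _ Hb Hsg Hcrit s ltac:(lra) ltac:(lra) Hs).
  pose proof (phi_critical _ _ _ _ Hb Hsg Hcrit).
  rewrite l_double_INR by exact Hb. lra.
Qed.

Lemma phi_lt_l_double_INR (n : nat) (b s : R) : 1 <= b -> s ^ 2 <= 1 -> s <> sig n b ->
  phi (INR n + 1) (INR n) b s - 2 * INR n - sqrt 2 < l (2 * INR n) b.
Proof.
  intros Hb Hs Hne. destruct (sig_spec n b Hb) as [Hsg Hcrit]. pose proof (pos_INR n).
  pose proof (phi_lt_critical_value _ _ _ _ Hb Hsg Hcrit s ltac:(lra) ltac:(lra) Hs Hne).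
  pose proof (phi_critical _ _ _ _ Hb Hsg Hcrit).
  rewrite l_double_INR by exact Hb. lra.
Qed.

Lemma delta_double_INR (k : nat) (b : R) :
  delta k b = l (2 * INR (S k)) b - l (2 * INR k) b.
Proof. unfold delta. rewrite S_INR. f_equal. f_equal. ring. Qed.

Lemma sig_succ_neq (k : nat) (b : R) : 1 <= b -> sig (S k) b <> sig k b.
Proof.
  intros Hb Heq. destruct (sig_spec k b Hb) as [Hs Hk]. destruct (sig_spec (S k) b Hb) as [_ HSk].
  unfold is_critical in Hk, HSk. rewrite Heq, S_INR in HSk.
  assert (Hu : 0 < sig k b / sqrt (1 - sig k b ^ 2)).
  { apply Rdiv_lt_0_compat; [lra | apply sqrt_lt_R0; nra]. }
  assert (Hv : 0 < sig k b / sqrt (b ^ 2 - sig k b ^ 2)).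
  { apply Rdiv_lt_0_compat; [lra | apply sqrt_lt_R0; nra]. }
  unfold Rdiv in *. nra.
Qed.

Lemma sig_sq_le_1 (n : nat) (b : R) : 1 <= b -> sig n b ^ 2 <= 1.
Proof. intros Hb. destruct (sig_spec n b Hb) as [Hs _]. nra. Qed.

Lemma delta_lt_succ (k : nat) (b : R) : 1 <= b -> delta k b < delta (S k) b.
Proof.
  intros Hb. rewrite !delta_double_INR.
  set (s := sig (S k) b).
  pose proof (sig_sq_le_1 (S k) b Hb) as Hs.
  pose proof (phi_lt_l_double_INR k b s Hb Hs (sig_succ_neq k b Hb)) as Hk.
  pose proof (phi_le_l_double_INR (S (S k)) b s Hb Hs) as HSSk.
  rewrite (l_double_INR (S k)) by exact Hb. fold s.
  rewrite !phi_succ in HSSk. rewrite phi_succ.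
  pose proof (S_INR k). pose proof (S_INR (S k)). lra.
Qed.

Lemma root_sum_sub_2_le_delta (k : nat) (b : R) : 1 <= b ->
  root_sum b (sig k b) - 2 <= delta k b.
Proof.
  intros Hb. rewrite delta_double_INR.
  pose proof (phi_le_l_double_INR (S k) b (sig k b) Hb (sig_sq_le_1 k b Hb)) as H.
  rewrite (l_double_INR k) by exact Hb. rewrite phi_succ in H. pose proof (S_INR k). lra.
Qed.

Lemma delta_le_root_sum_sub_2 (k : nat) (b : R) : 1 <= b ->
  delta k b <= root_sum b (sig (S k) b) - 2.
Proof.
  intros Hb. rewrite delta_double_INR.
  pose proof (phi_le_l_double_INR k b (sig (S k) b) Hb (sig_sq_le_1 (S k) b Hb)) as H.
  rewrite (l_double_INR (S k)) by exact Hb. rewrite phi_succ. pose proof (S_INR k). lra.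
Qed.

Lemma sqrt_sq_sub_bounds (r x : R) : 1 <= r -> 0 <= x <= 1 ->
  r - x / (2 * r) - x ^ 2 / 2 <= sqrt (r ^ 2 - x) <= r - x / (2 * r).
Proof.
  intros Hr Hx.
  assert (Hi : x / (2 * r) <= x / 2).
  { apply Rmult_le_compat_l; [lra | apply Rinv_le_contravar; lra]. }
  assert (Hi0 : 0 <= x / (2 * r)) by (apply Rdiv_le_0_compat; lra).
  assert (Hir : x / (2 * r) * r = x / 2) by (field; lra).
  split.
  - apply sqrt_ge_of_sq_le; [nra |].
    set (e := x / (2 * r) + x ^ 2 / 2).
    assert (He : 0 <= e <= x) by (unfold e; nra).
    assert (He2 : e * e <= r * x ^ 2) by nra.
    replace ((r - x / (2 * r) - x ^ 2 / 2) * (r - x / (2 * r) - x ^ 2 / 2))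
      with (r ^ 2 - x - r * x ^ 2 + e * e) by (unfold e; field; lra).
    lra.
  - apply sqrt_le_of_le_sq; nra.
Qed.

Lemma root_sum_bounds (b s : R) : 1 <= b -> s ^ 2 <= 1 ->
  b - 1 - (1 + / b) * s ^ 2 / 2 - s ^ 4 <= root_sum b s - 2 <=
  b - 1 - (1 + / b) * s ^ 2 / 2.
Proof.
  intros Hb Hs.
  assert (Hx : 0 <= s ^ 2 <= 1) by nra.
  pose proof (sqrt_sq_sub_bounds 1 (s ^ 2) ltac:(lra) Hx) as H1.
  pose proof (sqrt_sq_sub_bounds b (s ^ 2) Hb Hx) as Hb2.
  unfold root_sum. rewrite pow1 in H1.
  replace (s ^ 4) with ((s ^ 2) ^ 2) by ring.
  replace (s ^ 2 / (2 * b)) with (/ b * s ^ 2 / 2) in Hb2 by (field; lra).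
  replace (s ^ 2 / (2 * 1)) with (s ^ 2 / 2) in H1 by field.
  nra.
Qed.

Lemma sqrt_sq_sub_ge (r s : R) : 1 <= r -> s ^ 2 <= 1 / 2 ->
  r <= (1 + s ^ 2) * sqrt (r ^ 2 - s ^ 2).
Proof.
  intros Hr Hs.
  pose proof (sqrt_pos (r ^ 2 - s ^ 2)) as Hu0.
  pose proof (sqrt_sqrt (r ^ 2 - s ^ 2) ltac:(nra)) as Huu.
  set (u := sqrt (r ^ 2 - s ^ 2)) in *. set (x := s ^ 2) in *.
  assert (Hx : 0 <= x) by (unfold x; nra).
  (* ((1 + x) u)^2 - r^2 = x (r^2 (2 + x) - (1 + x)^2) and r^2 (2 + x) - (1 + x)^2 >= 1 - x - x^2 *)
  assert (Hsq : r * r <= ((1 + x) * u) * ((1 + x) * u)).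
  { assert (1 <= r ^ 2) by nra.
    assert (0 <= x * (r ^ 2 - 1) * (2 + x)) by (apply Rmult_le_pos; [apply Rmult_le_pos |]; lra).
    assert (0 <= x * (1 - x - x ^ 2)) by (apply Rmult_le_pos; nra).
    replace (((1 + x) * u) * ((1 + x) * u)) with ((1 + x) ^ 2 * (u * u)) by ring.
    rewrite Huu. nra. }
  assert (0 <= (1 + x) * u) by (apply Rmult_le_pos; lra).
  nra.
Qed.

Lemma div_le_div_sqrt_sq_sub (r s : R) : 0 < r -> 0 <= s -> s ^ 2 < r ^ 2 ->
  s / r <= s / sqrt (r ^ 2 - s ^ 2).
Proof.
  intros Hr Hs Hsr.
  apply Rmult_le_compat_l; [exact Hs |].
  apply Rinv_le_contravar; [apply sqrt_lt_R0; lra |].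
  apply sqrt_le_of_le_sq; nra.
Qed.

Lemma div_sqrt_sq_sub_le (r s : R) : 1 <= r -> 0 <= s -> s ^ 2 <= 1 / 2 ->
  s / sqrt (r ^ 2 - s ^ 2) <= (1 + s ^ 2) * s / r.
Proof.
  intros Hr Hs Hs2.
  pose proof (sqrt_sq_sub_ge r s Hr Hs2) as H.
  assert (Hu : 0 < sqrt (r ^ 2 - s ^ 2)) by (apply sqrt_lt_R0; nra).
  replace (s / sqrt (r ^ 2 - s ^ 2)) with ((1 + s ^ 2) * s / ((1 + s ^ 2) * sqrt (r ^ 2 - s ^ 2)))
    by (field; split; nra).
  apply Rmult_le_compat_l; [nra |].
  apply Rinv_le_contravar; lra.
Qed.

Section CriticalBounds.

Variables (pp qq b sg : R).
Hypotheses (Hp : 0 <= pp) (Hq : 0 <= qq) (Hb : 1 <= b) (Hsg : 0 < sg < 1)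
  (Hcrit : is_critical pp qq b sg).

Let Hcrit_split : pp * (sg / sqrt (1 ^ 2 - sg ^ 2)) + qq * (sg / sqrt (b ^ 2 - sg ^ 2)) = 1.
Proof. rewrite pow1. unfold is_critical, Rdiv in *. rewrite <- !Rmult_assoc. exact Hcrit. Qed.

Lemma critical_point_le : sg * (pp + qq / b) <= 1.
Proof.
  rewrite <- Hcrit_split.
  pose proof (div_le_div_sqrt_sq_sub 1 sg ltac:(lra) ltac:(lra) ltac:(nra)) as H1.
  pose proof (div_le_div_sqrt_sq_sub b sg ltac:(lra) ltac:(lra) ltac:(nra)) as Hb2.
  replace (sg / 1) with sg in H1 by field.
  replace (sg * (pp + qq / b)) with (pp * sg + qq * (sg / b)) by (field; lra).
  apply Rplus_le_compat; apply Rmult_le_compat_l; assumption.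
Qed.

Lemma critical_point_ge : sg ^ 2 <= 1 / 2 -> 1 <= sg * (1 + sg ^ 2) * (pp + qq / b).
Proof.
  intros Hs2. rewrite <- Hcrit_split at 1.
  pose proof (div_sqrt_sq_sub_le 1 sg ltac:(lra) ltac:(lra) Hs2) as H1.
  pose proof (div_sqrt_sq_sub_le b sg Hb ltac:(lra) Hs2) as Hb2.
  replace ((1 + sg ^ 2) * sg / 1) with ((1 + sg ^ 2) * sg) in H1 by field.
  replace (sg * (1 + sg ^ 2) * (pp + qq / b))
    with (pp * ((1 + sg ^ 2) * sg) + qq * ((1 + sg ^ 2) * sg / b)) by (field; lra).
  apply Rplus_le_compat; apply Rmult_le_compat_l; assumption.
Qed.

End CriticalBounds.

Definition expansion (b K : R) : R := (b - 1) - b / (2 * (b + 1)) * (1 / K ^ 2).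

Section Expansion.

Variables (b K s d : R).
Hypotheses (Hb : 1 <= b) (HK : 1 <= K) (Hs : 0 <= s).

Let a := 1 + / b.
Let y := / K.

Let inv_bounds (x : R) : 1 <= x -> 0 < / x <= 1.
Proof.
  intros Hx. split; [apply Rinv_0_lt_compat; lra |].
  rewrite <- Rinv_1. apply Rinv_le_contravar; lra.
Qed.

Let Ha : 1 < a <= 2.
Proof. pose proof (inv_bounds b Hb). unfold a. lra. Qed.

Let Hy : 0 < y <= 1.
Proof. exact (inv_bounds K HK). Qed.

Let HKy : K * y = 1.
Proof. unfold y. field. lra. Qed.

Let expansion_ay : expansion b K = b - 1 - y ^ 2 / (2 * a).
Proof. unfold expansion, y, a. field. lra. Qed.

Let term_ay : (1 + / b) * s ^ 2 / 2 = (a * s) ^ 2 / (2 * a).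
Proof. unfold a. field. lra. Qed.

Lemma expansion_lower :
  s * ((K + 1) + K / b) <= 1 ->
  b - 1 - (1 + / b) * s ^ 2 / 2 - s ^ 4 <= d ->
  expansion b K - 1 / K ^ 3 <= d.
Proof.
  intros Hsig Hd.
  replace ((K + 1) + K / b) with (1 + K * a) in Hsig by (unfold a; field; lra).
  assert (Hw : a * s <= y) by nra.
  assert (Hsy : s <= y) by nra.
  assert (Hterm : (a * s) ^ 2 / (2 * a) <= y ^ 2 / (2 * a)).
  { apply Rmult_le_compat_r; [apply Rlt_le, Rinv_0_lt_compat; lra |].
    apply pow_incr. split; [apply Rmult_le_pos |]; lra. }
  assert (Hs4 : s ^ 4 <= y ^ 3).
  { assert (s ^ 4 <= y ^ 4) by (apply pow_incr; lra).
    assert (0 <= y ^ 3) by (apply pow_le; lra).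
    replace (y ^ 4) with (y ^ 3 * y) in * by ring. nra. }
  replace (1 / K ^ 3) with (y ^ 3) by (unfold y; field; lra).
  rewrite expansion_ay. rewrite term_ay in Hd. lra.
Qed.

Let rescaled_sq_ge : 2 <= K ->
  s * ((K + 2) + (K + 1) / b) <= 1 ->
  1 <= s * (1 + s ^ 2) * ((K + 2) + (K + 1) / b) ->
  y ^ 2 - 8 * y ^ 3 <= (a * s) ^ 2.
Proof.
  intros HK2 Hsig_le Hsig_ge.
  replace ((K + 2) + (K + 1) / b) with (1 + (K + 1) * a) in Hsig_le, Hsig_ge
    by (unfold a; field; lra).
  set (w := a * s).
  assert (Hy2 : y <= 1 / 2).
  { unfold y. replace (1 / 2) with (/ 2) by field. apply Rinv_le_contravar; lra. }
  assert (Hw0 : 0 <= w) by (unfold w; nra).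
  assert (Hwy : w <= y) by (unfold w; nra).
  assert (Hsy : s <= y) by (unfold w in Hwy; nra).
  assert (Hw1 : 1 <= w * (1 + y ^ 2) * (K + 2)).
  { assert (1 + (K + 1) * a <= a * (K + 2)) by nra.
    assert (0 <= s * (1 + s ^ 2)) by nra.
    assert (1 <= w * (1 + s ^ 2) * (K + 2)) by (unfold w; nra).
    assert (s ^ 2 <= y ^ 2) by (apply pow_incr; lra).
    nra. }
  assert (Hwy4 : y <= w * (1 + 4 * y)).
  { assert (Hy1 : y <= w * (1 + y ^ 2) * (K * y + 2 * y)) by nra.
    rewrite HKy in Hy1. nra. }
  assert (y ^ 2 <= w ^ 2 * (1 + 4 * y) ^ 2) by nra.
  nra.
Qed.

Lemma expansion_upper : 2 <= K ->
  s * ((K + 2) + (K + 1) / b) <= 1 ->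
  1 <= s * (1 + s ^ 2) * ((K + 2) + (K + 1) / b) ->
  d <= b - 1 - (1 + / b) * s ^ 2 / 2 ->
  d <= expansion b K + 4 / K ^ 3.
Proof.
  intros HK2 Hsig_le Hsig_ge Hd.
  assert (Hterm : (y ^ 2 - 8 * y ^ 3) / (2 * a) <= (a * s) ^ 2 / (2 * a)).
  { apply Rmult_le_compat_r; [apply Rlt_le, Rinv_0_lt_compat; lra |].
    exact (rescaled_sq_ge HK2 Hsig_le Hsig_ge). }
  assert (Hy3 : 8 * y ^ 3 / (2 * a) <= 4 * y ^ 3).
  { replace (8 * y ^ 3 / (2 * a)) with (4 * y ^ 3 * / a) by (field; lra).
    rewrite <- (Rmult_1_r (4 * y ^ 3)) at 2.
    apply Rmult_le_compat_l; [assert (0 <= y ^ 3) by (apply pow_le; lra); lra |].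
    rewrite <- Rinv_1. apply Rinv_le_contravar; lra. }
  replace ((y ^ 2 - 8 * y ^ 3) / (2 * a)) with (y ^ 2 / (2 * a) - 8 * y ^ 3 / (2 * a)) in Hterm
    by (field; lra).
  replace (4 / K ^ 3) with (4 * y ^ 3) by (unfold y; field; lra).
  rewrite expansion_ay. rewrite term_ay in Hd. lra.
Qed.

End Expansion.

Lemma sig_mul_le (n : nat) (b : R) : 1 <= b ->
  sig n b * ((INR n + 1) + INR n / b) <= 1.
Proof.
  intros Hb. destruct (sig_spec n b Hb) as [Hs Hcrit]. pose proof (pos_INR n).
  apply (critical_point_le _ _ b); auto; lra.
Qed.

Lemma sig_mul_ge (n : nat) (b : R) : 1 <= b -> (1 <= n)%nat ->
  1 <= sig n b * (1 + sig n b ^ 2) * ((INR n + 1) + INR n / b).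
Proof.
  intros Hb Hn. destruct (sig_spec n b Hb) as [Hs Hcrit].
  apply le_INR in Hn. simpl in Hn.
  pose proof (sig_mul_le n b Hb).
  assert (0 <= INR n / b) by (apply Rdiv_le_0_compat; lra).
  assert (sig n b <= 1 / 2) by nra.
  apply (critical_point_ge _ _ b); auto; nra.
Qed.

Lemma expansion_sub_le_delta (k : nat) (b : R) : 1 <= b -> (1 <= k)%nat ->
  expansion b (INR k) - 1 / INR k ^ 3 <= delta k b.
Proof.
  intros Hb Hk. apply le_INR in Hk. simpl in Hk.
  destruct (sig_spec k b Hb) as [Hs _].
  pose proof (root_sum_sub_2_le_delta k b Hb).
  pose proof (root_sum_bounds b (sig k b) Hb ltac:(nra)).
  apply (expansion_lower b (INR k) (sig k b)); try lra.
  exact (sig_mul_le k b Hb).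
Qed.

Lemma delta_le_expansion_add (k : nat) (b : R) : 1 <= b -> (2 <= k)%nat ->
  delta k b <= expansion b (INR k) + 4 / INR k ^ 3.
Proof.
  intros Hb Hk. apply le_INR in Hk. simpl in Hk.
  destruct (sig_spec (S k) b Hb) as [Hs _].
  pose proof (delta_le_root_sum_sub_2 k b Hb).
  pose proof (root_sum_bounds b (sig (S k) b) Hb ltac:(nra)).
  pose proof (sig_mul_le (S k) b Hb) as Hle.
  pose proof (sig_mul_ge (S k) b Hb ltac:(lia)) as Hge.
  rewrite S_INR in Hle, Hge. replace (INR k + 1 + 1) with (INR k + 2) in Hle, Hge by ring.
  apply (expansion_upper b (INR k) (sig (S k) b)); lra.
Qed.

Theorem theorem3p8 (beta : R) (hbeta : 1 < beta) :
  (forall k : nat, delta k beta < delta (S k) beta) /\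
  (exists C : R, exists K : nat, forall k : nat, (K <= k)%nat ->
     Rabs (delta k beta - ((beta - 1) - beta / (2 * (beta + 1)) * (1 / INR k ^ 2)))
       <= C / INR k ^ 3).
Proof.
  assert (Hb : 1 <= beta) by lra.
  split; [intro k; exact (delta_lt_succ k beta Hb) |].
  exists 4, 2%nat. intros k Hk.
  assert (HK : 2 <= INR k) by (apply le_INR in Hk; exact Hk).
  pose proof (expansion_sub_le_delta k beta Hb ltac:(lia)).
  pose proof (delta_le_expansion_add k beta Hb Hk).
  assert (1 / INR k ^ 3 <= 4 / INR k ^ 3).
  { apply Rmult_le_compat_r; [apply Rlt_le, Rinv_0_lt_compat, pow_lt |]; lra. }
  unfold expansion in *. apply Rabs_le. lra.
Qed.
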